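(* For every positive integer $k$, $$W(k+1,2)=\frac{\pi}{2^k}\,\bar t(k)-\bar T(1,k).$$
   Context: $\bar t(k):=\sum_{n\ge1}\frac{(-1)^{n-1}}{(n-1/2)^k}$. For positive integers $k_1,k_2$, $\bar T(k_1,k_2):=4\sum_{0<n_1<n_2}\frac{(-1)^{n_2}}{(2n_1-1)^{k_1}(2n_2-2)^{k_2}}$, and $W(K,2):=\sum_{k_1+k_2=K,\,k_1,k_2\ge1}\bar T(k_1,k_2)$. *)

From Stdlib Require Import Reals List.
From Coquelicot Require Import Coquelicot.
Open Scope R_scope.

(* tbar k = sum_{n>=1} (-1)^(n-1) / (n - 1/2)^k ; index m = n - 1 >= 0.
   Series = limit of the partial sums in the natural order. *)
Definition tbar (k : nat) : R :=
  Series (fun m : nat => (-1) ^ m / (INR m + / 2) ^ k).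

(* Tbar k1 k2 = 4 * sum_{0<n1<n2} (-1)^n2 / ((2 n1 - 1)^k1 (2 n2 - 2)^k2),
   summed as an iterated series: outer index n2 = m + 2 (n2 >= 2), inner
   finite sum over n1 = j + 1 with j = 0 .. m (i.e. 1 <= n1 <= n2 - 1). *)
Definition Tbar (k1 k2 : nat) : R :=
  4 * Series (fun m : nat =>
        (-1) ^ (m + 2) / (2 * INR (m + 2) - 2) ^ k2 *
        sum_n (fun j : nat => / (2 * INR (j + 1) - 1) ^ k1) m).

Definition W2 (K : nat) : R :=
  fold_right Rplus 0 (map (fun k1 => Tbar k1 (K - k1)) (seq 1 (K - 1))).

From Stdlib Require Import Reals List Lra Lia.
From Coquelicot Require Import Coquelicot.
Open Scope R_scope.

(* Rewrite everything over odd denominators: tbar k = 2^k sum_j a_j with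
   a_j = (-1)^j/(2j+1)^k, and Tbar k1 k2 = 4 sum_m (-1)^m H_k1(m)/(2m+2)^k2
   where H_k1(m) = sum_{j<=m} 1/(2j+1)^k1 (odd harmonic numbers).  All these
   alternating series converge by the Leibniz criterion.

   For fixed m, summing the Tbar terms over k1 + k2 = k + 1 and using the
   partial fractions sum_i 1/(a^i b^(k+1-i)) = (1/a^k - 1/b^k)/(b - a) with
   a = 2j+1, b = 2m+2 (so 1/(b-a) is the (m-j)-th Leibniz term 1/(2(m-j)+1))
   yields the m-th term of the Cauchy product of (a_j) with Leibniz's series
   1 - 1/3 + 1/5 - ..., minus the k1 = 1 term with exponent k.  Both factors
   only converge conditionally, so the limit of the Cauchy product is obtained
   from a Mertens-type estimate: the weighted tail errors are bounded by
   sum_j 1/((2j+1)(2(M-j)+1)) = H_1(M)/(M+1), which tends to 0 by Cesaro.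
   Hence sum_{k1+k2=k+1} Tbar k1 k2 / 4 = (pi/4) sum_j a_j - Tbar 1 k / 4. *)

Lemma sum_rev (f : nat -> R) (n : nat) :
  sum_f_R0 (fun j => f (n - j)%nat) n = sum_f_R0 f n.
Proof.
  induction n as [|n IH]; [reflexivity|].
  rewrite decomp_sum by lia; simpl pred.
  rewrite Nat.sub_0_r.
  rewrite (sum_eq _ (fun j => f (n - j)%nat)) by (intros; reflexivity).
  rewrite IH, tech5; simpl; ring.
Qed.

Lemma sum_switch (g : nat -> nat -> R) (n M : nat) :
  sum_f_R0 (fun i => sum_f_R0 (g i) M) n =
  sum_f_R0 (fun m => sum_f_R0 (fun i => g i m) n) M.
Proof.
  induction n as [|n IH]; [reflexivity|].
  simpl sum_f_R0 at 1; rewrite IH, <- sum_plus.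
  apply sum_eq; reflexivity.
Qed.

Lemma sum_cauchy_regroup (a b : nat -> R) (M : nat) :
  sum_f_R0 (fun m => sum_f_R0 (fun j => a j * b (m - j)%nat) m) M =
  sum_f_R0 (fun j => a j * sum_f_R0 b (M - j)) M.
Proof.
  induction M as [|M IH]; [simpl; ring|].
  rewrite tech5, IH, !(tech5 (fun j => _ * _)), Nat.sub_diag.
  rewrite (sum_eq (fun j => a j * sum_f_R0 b (S M - j))
                  (fun j => a j * sum_f_R0 b (M - j) + a j * b (S M - j)%nat)).
  - rewrite sum_plus; simpl; ring.
  - intros i Hi. replace (S M - i)%nat with (S (M - i)) by lia. simpl; ring.
Qed.

Lemma fold_seq_sum (f : nat -> R) (s n : nat) :
  fold_right Rplus 0 (map f (seq s (S n))) = sum_f_R0 (fun i => f (s + i)%nat) n.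
Proof.
  revert s; induction n as [|n IH]; intros s.
  - simpl; rewrite Nat.add_0_r; ring.
  - change (f s + fold_right Rplus 0 (map f (seq (S s) (S n))) =
            sum_f_R0 (fun i => f (s + i)%nat) (S n)).
    rewrite IH, (decomp_sum _ (S n)) by lia; simpl pred.
    rewrite Nat.add_0_r; f_equal.
    apply sum_eq; intros i _; f_equal; lia.
Qed.

Lemma is_lim_seq_sum (f : nat -> nat -> R) (l : nat -> R) (n : nat) :
  (forall i, (i <= n)%nat -> is_lim_seq (f i) (l i)) ->
  is_lim_seq (fun M => sum_f_R0 (fun i => f i M) n) (sum_f_R0 l n).
Proof.
  induction n as [|n IH]; intros Hf; simpl.
  - apply Hf; lia.
  - apply is_lim_seq_plus'; [apply IH; intros; apply Hf; lia | apply Hf; lia].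
Qed.

Lemma partial_fraction_powers (a b : R) (n : nat) :
  0 < a -> 0 < b -> a <> b ->
  sum_f_R0 (fun i => / a ^ S i * / b ^ (S n - i)) n =
  (/ a ^ S n - / b ^ S n) / (b - a).
Proof.
  intros Ha Hb Hab.
  induction n as [|n IH]; [simpl; field; lra|].
  assert (Han : 0 < a ^ S n) by (apply pow_lt; lra).
  assert (Hbn : 0 < b ^ S n) by (apply pow_lt; lra).
  rewrite tech5, (sum_eq _ (fun i => / a ^ S i * / b ^ (S n - i) * / b)).
  - rewrite <- scal_sum, IH.
    replace (S (S n) - S n)%nat with 1%nat by lia.
    change (a ^ S (S n)) with (a * a ^ S n); change (b ^ S (S n)) with (b * b ^ S n).
    simpl (b ^ 1); field; repeat split; lra.
  - intros i Hi. replace (S (S n) - i)%nat with (S (S n - i)) by lia.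
    change (b ^ S (S n - i)) with (b * b ^ (S n - i)).
    assert (0 < b ^ (S n - i)) by (apply pow_lt; lra).
    assert (0 < a ^ S i) by (apply pow_lt; lra).
    field; repeat split; lra.
Qed.

Lemma alternating_summable (U : nat -> R) :
  Un_decreasing U -> is_lim_seq U 0 -> ex_series (fun n => (-1) ^ n * U n).
Proof.
  intros Hdec Hlim%is_lim_seq_Reals.
  destruct (alternated_series U Hdec Hlim) as [l Hl].
  exists l; apply is_series_Reals, Hl.
Qed.

Lemma alternating_tail_bound (U : nat -> R) (l : R) :
  Un_decreasing U -> (forall n, 0 <= U n) ->
  (forall N, sum_f_R0 (tg_alt U) (S (2 * N)) <= l <= sum_f_R0 (tg_alt U) (2 * N)) ->
  forall n, Rabs (sum_f_R0 (tg_alt U) n - l) <= U n.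
Proof.
  intros Hdec Hpos Hencl n.
  destruct (Nat.Even_or_Odd n) as [[N ->] | [N ->]]; apply Rabs_le.
  - destruct (Hencl N) as [Hlo Hhi].
    rewrite tech5 in Hlo; unfold tg_alt at 2 in Hlo; rewrite pow_1_odd in Hlo.
    specialize (Hdec (2 * N)%nat); lra.
  - destruct (Hencl N) as [Hlo _]; destruct (Hencl (S N)) as [_ Hhi].
    replace (2 * S N)%nat with (S (S (2 * N))) in Hhi by lia.
    rewrite tech5 in Hhi; unfold tg_alt at 2 in Hhi.
    replace (S (S (2 * N))) with (2 * S N)%nat in Hhi by lia.
    rewrite pow_1_even in Hhi.
    replace (2 * N + 1)%nat with (S (2 * N)) by lia.
    replace (2 * S N)%nat with (S (S (2 * N))) in Hhi by lia.
    specialize (Hdec (S (2 * N))); lra.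
Qed.

Lemma PI_tg_odd (n : nat) : PI_tg n = / (2 * INR n + 1).
Proof. unfold PI_tg; rewrite plus_INR, mult_INR; reflexivity. Qed.

Lemma leibniz_tail_bound (n : nat) :
  Rabs (sum_f_R0 (tg_alt PI_tg) n - PI / 4) <= PI_tg n.
Proof.
  apply alternating_tail_bound; [apply PI_tg_decreasing | apply PI_tg_pos | apply PI_ineq].
Qed.

Definition odd_harmonic (k m : nat) : R :=
  sum_f_R0 (fun j => / (2 * INR j + 1) ^ k) m.

(* Cesaro: the odd harmonic numbers of order 1 grow sublinearly. *)
Lemma odd_harmonic_mean_vanishes :
  is_lim_seq (fun n => odd_harmonic 1 n / INR (S n)) 0.
Proof.
  assert (H := Cesaro_1 PI_tg 0 PI_tg_cv).
  apply is_lim_seq_Reals, is_lim_seq_incr_1 in H.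
  eapply is_lim_seq_ext; [|exact H]; intros n; simpl pred.
  unfold odd_harmonic; f_equal; apply sum_eq; intros i _.
  rewrite pow_1, PI_tg_odd; reflexivity.
Qed.

Definition tbar_term (k j : nat) : R := (-1) ^ j * / (2 * INR j + 1) ^ k.

Definition Tbar_term (k1 k2 m : nat) : R :=
  (-1) ^ m * (odd_harmonic k1 m / (2 * INR m + 2) ^ k2).

Lemma tbar_as_series (k : nat) : tbar k = 2 ^ k * Series (tbar_term k).
Proof.
  unfold tbar; rewrite <- Series_scal_l; apply Series_ext; intros m.
  unfold tbar_term.
  replace (INR m + / 2) with ((2 * INR m + 1) / 2) by field.
  assert (0 < 2 * INR m + 1) by (pose proof (pos_INR m); lra).
  assert (0 < (2 * INR m + 1) ^ k) by (apply pow_lt; lra).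
  assert (0 < 2 ^ k) by (apply pow_lt; lra).
  unfold Rdiv; rewrite Rpow_mult_distr, pow_inv; field; lra.
Qed.

Lemma Tbar_as_series (k1 k2 : nat) : Tbar k1 k2 = 4 * Series (Tbar_term k1 k2).
Proof.
  unfold Tbar; f_equal; apply Series_ext; intros m.
  unfold Tbar_term, odd_harmonic; rewrite sum_n_Reals.
  rewrite (sum_eq _ (fun j => / (2 * INR j + 1) ^ k1)).
  2:{ intros i _; rewrite plus_INR; simpl; do 2 f_equal; ring. }
  rewrite pow_add, plus_INR; simpl (INR 2).
  replace (2 * (INR m + (1 + 1)) - 2) with (2 * INR m + 2) by ring.
  unfold Rdiv; ring.
Qed.

Lemma pow_ge_base (x : R) (n : nat) : 1 <= x -> (1 <= n)%nat -> x <= x ^ n.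
Proof. intros Hx Hn; rewrite <- (pow_1 x) at 1; apply Rle_pow; auto. Qed.

Lemma odd_harmonic_ge1 (k m : nat) : 1 <= odd_harmonic k m.
Proof.
  induction m as [|m IH]; unfold odd_harmonic in *.
  - simpl; rewrite Rmult_0_r, Rplus_0_l, pow1; lra.
  - rewrite tech5.
    assert (0 < / (2 * INR (S m) + 1) ^ k).
    { apply Rinv_0_lt_compat, pow_lt; pose proof (pos_INR (S m)); lra. }
    lra.
Qed.

Lemma odd_harmonic_le_order1 (k m : nat) :
  (1 <= k)%nat -> odd_harmonic k m <= odd_harmonic 1 m.
Proof.
  intros Hk; apply sum_Rle; intros n _; pose proof (pos_INR n).
  rewrite pow_1; apply Rinv_le_contravar; [lra | apply pow_ge_base; auto; lra].
Qed.

(* sum_j (-1)^j/(2j+1)^k converges: its terms decrease and are dominated by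
   the Leibniz terms. *)
Lemma tbar_term_summable (k : nat) : (1 <= k)%nat -> ex_series (tbar_term k).
Proof.
  intros Hk; apply alternating_summable.
  - intros m; rewrite S_INR; pose proof (pos_INR m).
    apply Rinv_le_contravar; [apply pow_lt; lra | apply pow_incr; lra].
  - apply is_lim_seq_le_le with (u := fun _ => 0) (w := PI_tg).
    + intros n; pose proof (pos_INR n); rewrite PI_tg_odd; split.
      * left; apply Rinv_0_lt_compat, pow_lt; lra.
      * apply Rinv_le_contravar; [lra | apply pow_ge_base; auto; lra].
    + apply is_lim_seq_const.
    + apply is_lim_seq_Reals, PI_tg_cv.
Qed.

(* The absolute values H_k1(m)/(2m+2)^k2 of the [Tbar] terms decrease: passing
   from m to m+1 adds at most 1/(2m+3) to H_k1(m) >= 1, while the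
   denominator gains at least a factor (2m+4)/(2m+2). *)
Lemma Tbar_term_abs_decreasing (k1 k2 : nat) :
  (1 <= k1)%nat -> (1 <= k2)%nat ->
  Un_decreasing (fun m => odd_harmonic k1 m / (2 * INR m + 2) ^ k2).
Proof.
  intros Hk1 Hk2 m.
  destruct k2 as [|p]; [lia|].
  unfold odd_harmonic at 1; rewrite tech5; fold (odd_harmonic k1 m).
  rewrite S_INR.
  pose proof (pos_INR m); pose proof (odd_harmonic_ge1 k1 m) as Hge1.
  set (b := 2 * INR m + 2); set (h := odd_harmonic k1 m) in *.
  set (c := / (2 * (INR m + 1) + 1) ^ k1).
  replace (2 * (INR m + 1) + 2) with (b + 2) by (unfold b; ring).
  assert (Hb : 2 <= b) by (unfold b; lra).
  assert (Hcb : c * b <= 1).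
  { assert (Hpow : b <= (2 * (INR m + 1) + 1) ^ k1).
    { eapply Rle_trans; [| apply pow_ge_base; auto; lra]. unfold b; lra. }
    unfold c; rewrite Rmult_comm; apply Rle_div_l; [apply pow_lt; lra | lra]. }
  assert (Hc : 0 < c) by (unfold c; apply Rinv_0_lt_compat, pow_lt; lra).
  assert (Hbp : 0 < b ^ p) by (apply pow_lt; lra).
  assert (Hbp2 : b ^ p <= (b + 2) ^ p) by (apply pow_incr; lra).
  simpl pow; apply Rle_div_l; [nra|].
  replace (h / (b * b ^ p) * ((b + 2) * (b + 2) ^ p))
    with (h * ((b + 2) * (b + 2) ^ p) / (b * b ^ p)) by (unfold Rdiv; ring).
  apply Rle_div_r; [nra|].
  assert (h * ((b + 2) * b ^ p) <= h * ((b + 2) * (b + 2) ^ p)) by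
    (apply Rmult_le_compat_l; [lra | apply Rmult_le_compat_l; lra]).
  assert ((h + c) * b <= h * (b + 2)) by lra.
  nra.
Qed.

Lemma Tbar_term_summable (k1 k2 : nat) :
  (1 <= k1)%nat -> (1 <= k2)%nat -> ex_series (Tbar_term k1 k2).
Proof.
  intros Hk1 Hk2; apply alternating_summable; [apply Tbar_term_abs_decreasing; auto|].
  (* 0 <= H_k1(n)/(2n+2)^k2 <= H_1(n)/(2n+2) = (1/2) H_1(n)/(n+1) *)
  apply is_lim_seq_le_le with (u := fun _ => 0)
    (w := fun n => / 2 * (odd_harmonic 1 n / INR (S n))).
  - intros n; pose proof (pos_INR n).
    pose proof (odd_harmonic_ge1 k1 n); pose proof (odd_harmonic_le_order1 k1 n Hk1).
    assert (Hpow : 2 * INR n + 2 <= (2 * INR n + 2) ^ k2) by (apply pow_ge_base; auto; lra).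
    split; [apply Rdiv_le_0_compat; [lra | apply pow_lt; lra]|].
    rewrite S_INR.
    replace (/ 2 * (odd_harmonic 1 n / (INR n + 1)))
      with (odd_harmonic 1 n / (2 * INR n + 2)) by (field; lra).
    unfold Rdiv; apply Rmult_le_compat; try lra.
    + left; apply Rinv_0_lt_compat, pow_lt; lra.
    + apply Rinv_le_contravar; lra.
  - apply is_lim_seq_const.
  - replace (Finite 0) with (Rbar_mult (/ 2) 0) by (simpl; f_equal; ring).
    apply is_lim_seq_scal_l, odd_harmonic_mean_vanishes.
Qed.

(* For fixed m, the diagonal sum over k1 + k2 = k + 1 of the [Tbar] terms
   telescopes by partial fractions (a = 2j+1, b = 2m+2, b - a = 2(m-j)+1)
   into the m-th Cauchy-product term of tbar_term k with Leibniz's series,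
   minus the k1 = 1 term with exponent k. *)
Lemma Tbar_terms_diagonal (k' m : nat) :
  sum_f_R0 (fun i => Tbar_term (S i) (S k' - i) m) k' =
  sum_f_R0 (fun j => tbar_term (S k') j * tg_alt PI_tg (m - j)) m
  - Tbar_term 1 (S k') m.
Proof.
  set (b := 2 * INR m + 2).
  assert (Hb : 0 < b) by (unfold b; pose proof (pos_INR m); lra).
  assert (Hpf : forall j, (j <= m)%nat ->
    sum_f_R0 (fun i => / (2 * INR j + 1) ^ S i * / b ^ (S k' - i)) k' =
    (/ (2 * INR j + 1) ^ S k' - / b ^ S k') * PI_tg (m - j)).
  { intros j Hj; pose proof (pos_INR j); pose proof (le_INR _ _ Hj).
    rewrite partial_fraction_powers by (unfold b; lra).
    rewrite PI_tg_odd, minus_INR by exact Hj.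
    unfold Rdiv; f_equal; f_equal; unfold b; ring. }
  transitivity ((-1) ^ m * sum_f_R0
    (fun j => (/ (2 * INR j + 1) ^ S k' - / b ^ S k') * PI_tg (m - j)) m).
  - unfold Tbar_term, odd_harmonic; fold b.
    rewrite <- (sum_eq _ _ _ Hpf), <- sum_switch, scal_sum.
    apply sum_eq; intros i _.
    unfold Rdiv; rewrite (Rmult_comm ((-1) ^ m)), (Rmult_comm _ (/ b ^ _)), scal_sum.
    reflexivity.
  - unfold Tbar_term, tbar_term, odd_harmonic, tg_alt; fold b.
    unfold Rdiv; rewrite <- (sum_rev (fun j => / (2 * INR j + 1) ^ 1)).
    rewrite (Rmult_comm (sum_f_R0 _ _) (/ b ^ S k')), !scal_sum, <- minus_sum.
    apply sum_eq; intros j Hj.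
    rewrite pow_1, <- PI_tg_odd.
    replace ((-1) ^ m) with ((-1) ^ j * (-1) ^ (m - j)) by (rewrite <- pow_add; f_equal; lia).
    unfold Rdiv; ring.
Qed.

Lemma cauchy_product_limit (a s e : nat -> R) (L l : R) :
  is_lim_seq (fun M => sum_f_R0 a M) L ->
  (forall n, Rabs (s n - l) <= e n) ->
  is_lim_seq (fun M => sum_f_R0 (fun j => Rabs (a j) * e (M - j)%nat) M) 0 ->
  is_lim_seq (fun M => sum_f_R0 (fun j => a j * s (M - j)%nat) M) (L * l).
Proof.
  intros HA Hs He.
  set (err M := sum_f_R0 (fun j => Rabs (a j) * e (M - j)%nat) M).
  assert (Hbound : forall M,
    Rabs (sum_f_R0 (fun j => a j * s (M - j)%nat) M - sum_f_R0 a M * l) <= err M).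
  { intros M; rewrite (Rmult_comm (sum_f_R0 a M)), scal_sum, <- minus_sum.
    eapply Rle_trans; [apply Rsum_abs | apply sum_Rle]; intros j _.
    replace (a j * s (M - j)%nat - a j * l) with (a j * (s (M - j)%nat - l)) by ring.
    rewrite Rabs_mult; apply Rmult_le_compat_l; [apply Rabs_pos | apply Hs]. }
  assert (HAl : is_lim_seq (fun M => sum_f_R0 a M * l) (L * l))
    by exact (is_lim_seq_scal_r _ l L HA).
  apply is_lim_seq_le_le with
    (u := fun M => sum_f_R0 a M * l - err M) (w := fun M => sum_f_R0 a M * l + err M).
  - intros M; specialize (Hbound M); apply Rabs_le_between in Hbound; lra.
  - replace (L * l) with (L * l - 0) by ring; apply is_lim_seq_minus'; assumption.
  - replace (L * l) with (L * l + 0) by ring; apply is_lim_seq_plus'; assumption.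
Qed.

(* Partial fractions 1/((2j+1)(2(M-j)+1)) = (1/(2j+1) + 1/(2(M-j)+1))/(2M+2)
   turn the self-convolution of the odd reciprocals into H_1(M)/(M+1). *)
Lemma odd_reciprocal_convolution (M : nat) :
  sum_f_R0 (fun j => / (2 * INR j + 1) * PI_tg (M - j)) M =
  odd_harmonic 1 M / INR (S M).
Proof.
  rewrite (sum_eq _ (fun j => (/ (2 * INR j + 1) + PI_tg (M - j)) * / (2 * INR M + 2))).
  - rewrite <- scal_sum, sum_plus, (sum_rev PI_tg M).
    rewrite (sum_eq PI_tg (fun j => / (2 * INR j + 1) ^ 1))
      by (intros; rewrite pow_1; apply PI_tg_odd).
    rewrite S_INR; unfold odd_harmonic.
    rewrite (sum_eq (fun j => / (2 * INR j + 1)) (fun j => / (2 * INR j + 1) ^ 1))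
      by (intros; rewrite pow_1; reflexivity).
    pose proof (pos_INR M); field; lra.
  - intros j Hj; rewrite PI_tg_odd, minus_INR by exact Hj.
    pose proof (pos_INR j); pose proof (le_INR _ _ Hj); field; lra.
Qed.

Lemma tbar_leibniz_product (k : nat) (L : R) :
  (1 <= k)%nat -> is_series (tbar_term k) L ->
  is_lim_seq (fun M => sum_f_R0
    (fun m => sum_f_R0 (fun j => tbar_term k j * tg_alt PI_tg (m - j)) m) M)
    (L * (PI / 4)).
Proof.
  intros Hk HL.
  eapply is_lim_seq_ext; [intros M; symmetry; apply sum_cauchy_regroup|].
  apply cauchy_product_limit with (e := PI_tg).
  - eapply is_lim_seq_ext; [intros M; apply sum_n_Reals | exact HL].
  - apply leibniz_tail_bound.
  - apply is_lim_seq_le_le with (u := fun _ => 0)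
      (w := fun M => odd_harmonic 1 M / INR (S M));
      [| apply is_lim_seq_const | apply odd_harmonic_mean_vanishes].
    intros M; rewrite <- odd_reciprocal_convolution; split.
    + apply cond_pos_sum; intros j.
      apply Rmult_le_pos; [apply Rabs_pos | apply PI_tg_pos].
    + apply sum_Rle; intros j _; apply Rmult_le_compat_r; [apply PI_tg_pos|].
      pose proof (pos_INR j); unfold tbar_term.
      rewrite Rabs_mult, pow_1_abs, Rmult_1_l, Rabs_pos_eq
        by (left; apply Rinv_0_lt_compat, pow_lt; lra).
      apply Rinv_le_contravar; [lra | apply pow_ge_base; auto; lra].
Qed.

Lemma series_partial_sums (a : nat -> R) (l : R) :
  is_series a l -> is_lim_seq (fun M => sum_f_R0 a M) l.
Proof. intros H; eapply is_lim_seq_ext; [intros M; apply sum_n_Reals | exact H]. Qed.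

(* The weight-(k+1) sum as a finite sum of series, indexed by i = k1 - 1. *)
Lemma W2_as_sum (k' : nat) :
  W2 (S k' + 1) = 4 * sum_f_R0 (fun i => Series (Tbar_term (S i) (S k' - i))) k'.
Proof.
  unfold W2; replace (S k' + 1 - 1)%nat with (S k') by lia.
  rewrite fold_seq_sum, scal_sum; apply sum_eq; intros i _.
  rewrite Tbar_as_series; replace (S k' + 1 - (1 + i))%nat with (S k' - i)%nat by lia.
  apply Rmult_comm.
Qed.

(* Key identity: summing the diagonal identity over m <= M and letting
   M -> oo gives sum_{k1+k2=k+1} sum_m T-terms = (pi/4) sum_j tbar_term k j
   - sum_m (k1 = 1 term). *)
Lemma diagonal_Tbar_series (k' : nat) (L : R) :
  is_series (tbar_term (S k')) L ->
  sum_f_R0 (fun i => Series (Tbar_term (S i) (S k' - i))) k' =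
  L * (PI / 4) - Series (Tbar_term 1 (S k')).
Proof.
  intros HL.
  set (partial M := sum_f_R0 (fun i => sum_f_R0 (Tbar_term (S i) (S k' - i)) M) k').
  assert (Hleft : is_lim_seq partial
                    (sum_f_R0 (fun i => Series (Tbar_term (S i) (S k' - i))) k')).
  { apply is_lim_seq_sum; intros i Hi.
    apply series_partial_sums, Series_correct, Tbar_term_summable; lia. }
  assert (Hright : is_lim_seq partial (L * (PI / 4) - Series (Tbar_term 1 (S k')))).
  { apply (is_lim_seq_ext (fun M =>
      sum_f_R0 (fun m =>
        sum_f_R0 (fun j => tbar_term (S k') j * tg_alt PI_tg (m - j)) m) M
      - sum_f_R0 (Tbar_term 1 (S k')) M)).
    { intros M; unfold partial.
      rewrite sum_switch, (sum_eq _ _ _ (fun m _ => Tbar_terms_diagonal k' m)).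
      symmetry; apply minus_sum. }
    apply is_lim_seq_minus'; [apply tbar_leibniz_product; [lia | exact HL]|].
    apply series_partial_sums, Series_correct, Tbar_term_summable; lia. }
  apply is_lim_seq_unique in Hleft, Hright.
  rewrite Hleft in Hright; injection Hright; auto.
Qed.

Theorem mainTheorem14 (k : nat) (hk : (1 <= k)%nat) :
  W2 (k + 1) = PI / 2 ^ k * tbar k - Tbar 1 k.
Proof.
  destruct k as [|k']; [lia|].
  destruct (tbar_term_summable (S k') hk) as [L HL].
  rewrite W2_as_sum, (diagonal_Tbar_series k' L HL).
  rewrite tbar_as_series, Tbar_as_series, (is_series_unique _ _ HL).
  assert (2 ^ S k' <> 0) by (apply pow_nonzero; lra).
  field; assumption.
Qed.
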